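(* Let $n\ge2$, let $\pi$ be uniform on $\mathrm{PF}_n$ and $f$ uniform on $\widetilde{\mathcal F}_n$. For $g\in\widetilde{\mathcal F}_n$ and $1\le i\le n-1$ let $X_i(g)=1$ if $g(i+1)<g(i)$ and $0$ otherwise. Then for all $t_1,\dots,t_{n-1}\in\{0,1\}$, $$P\{X_1(\pi)=t_1,\dots,X_{n-1}(\pi)=t_{n-1}\}=P\{X_1(f)=t_1,\dots,X_{n-1}(f)=t_{n-1}\}.$$ The same equality of joint distributions holds when $X_i$ is replaced by each of the indicators of $g(i+1)=g(i)$, of $g(i+1)\le g(i)$, of $g(i+1)>g(i)$, and of $g(i+1)\ge g(i)$.
   Context: A parking function of length $n$ is a sequence $(\pi_1,\dots,\pi_n)$ with $1\le\pi_i\le n$ such that $\#\{t:\pi_t\le i\}\ge i$ for all $1\le i\le n$; $\mathrm{PF}_n$ denotes the set of these. $\widetilde{\mathcal F}_n$ is the set of all functions $g:[n]\to[n+1]$ (written as sequences $(g(1),\dots,g(n))$), so $\mathrm{PF}_n\subseteq\widetilde{\mathcal F}_n$ and $|\widetilde{\mathcal F}_n|=(n+1)^n=(n+1)|\mathrm{PF}_n|$. *)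

From HB Require Import structures.
From mathcomp Require Import all_boot all_order all_algebra.
Set Implicit Arguments. Unset Strict Implicit. Unset Printing Implicit Defensive.
Import GRing.Theory Num.Theory.

(* Convention: a function g : [n] -> [n+1] is encoded as
   g : {ffun 'I_n -> 'I_n.+1}, where position i+1 of the paper is the
   ordinal i, and the paper's value g(i+1) is the ordinal value (g i) + 1.
   All comparisons between values are invariant under this shift. *)
Notation Ftilde n := {ffun 'I_n -> 'I_n.+1}.

(* Parking functions of length n: 1 <= pi_t <= n and, for all 1 <= i <= n,
   #{t : pi_t <= i} >= i.  With paper value pi_t = g t + 1, this reads
   g t < n and #{t : g t < i} >= i. *)
Definition PF (n : nat) : {set Ftilde n} :=
  [set g : Ftilde n | [forall t : 'I_n, (g t < n)%N] &&
     [forall i : 'I_n, (i.+1 <= #|[set t : 'I_n | (g t < i.+1)%N]|)%N]].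

(* The indicator statistic X_i(g) = R(g(i+1), g(i)), for paper indices
   1 <= i <= n-1 encoded as i : 'I_n.-1 (paper index i.+1). *)
(* gv g k = value of g at position k (as nat), for k < n (0 otherwise,
   never used out of range). *)
Definition gv (n : nat) (g : Ftilde n) (k : nat) : nat :=
  odflt 0%N (omap (fun j : 'I_n => nat_of_ord (g j)) (insub k)).

Definition Xstat (n : nat) (R : rel nat) (g : Ftilde n) (i : 'I_n.-1) : bool :=
  R (gv g i.+1) (gv g i).

Definition stat_event (n : nat) (R : rel nat) (t : 'I_n.-1 -> bool)
  : {set Ftilde n} :=
  [set g : Ftilde n | [forall i : 'I_n.-1, Xstat R g i == t i]].

Definition unif_prob (T : finType) (A E : {set T}) : rat :=
  (#|A :&: E|%:R / #|A|%:R)%R.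

Definition same_joint_law (n : nat) (R : rel nat) : Prop :=
  forall t : 'I_n.-1 -> bool,
    unif_prob (PF n) (stat_event R t) =
    unif_prob [set: Ftilde n] (stat_event R t).

From mathcomp Require Import all_boot all_order all_algebra zify.
Set Implicit Arguments. Unset Strict Implicit. Unset Printing Implicit Defensive.

(* Pollak's cyclic lemma: adding a constant [c] modulo [n+1] to all values
   of [g : [n] -> [n+1]], exactly one [c] yields a parking function (namely
   the one starting the cyclic reading of [g] where the surplus
   #{t : g t < q} + n + 1 - q first attains its minimum).  Hence every set
   [E] of functions carrying [n+1] injective self-maps that act like these
   shifts, as far as parking is concerned, satisfies
   #|E| = (n+1) #|PF n :&: E|.
   For the events "X_i(g) = b for all i in S" this is done with the shifts
   themselves when X_i compares by equality, and for the order comparisons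
   by shifting and then re-sorting the values inside each maximal run of
   positions linked by S: this keeps the value multiset, hence parking, and
   is injective on functions already sorted inside the runs.
   Inclusion-exclusion over the constraints X_i(g) = ~~ b then gives the
   same proportion for every event {X = t}. *)

Section UniqueHitCount.
Variables (T C : finType) (act : C -> T -> T) (A E : {set T}).
Hypothesis act_stable : forall c, {in E, forall x, act c x \in E}.
Hypothesis act_inj : forall c, {in E &, injective (act c)}.
Hypothesis unique_hit : {in E, forall x, #|[set c | act c x \in A]| = 1}.

Lemma act_image c : act c @: E = E.
Proof.
apply/eqP; rewrite eqEcard card_in_imset // leqnn andbT.
by apply/subsetP => _ /imsetP[x Ex ->]; apply: act_stable.
Qed.

Lemma card_hitting c : #|[set x in E | act c x \in A]| = #|A :&: E|.
Proof.
rewrite -(card_in_imset (f := act c)); last first.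
  by move=> x y; rewrite !inE => /andP[Ex _] /andP[Ey _]; apply: act_inj.
congr #|pred_of_set _|; apply/setP => y; rewrite inE; apply/imsetP/andP.
- by case=> x; rewrite inE => /andP[Ex Ax] ->; rewrite act_stable.
- case=> Ay; rewrite -{1}(act_image c) => /imsetP[x Ex yE].
  by exists x; rewrite // inE Ex -yE.
Qed.

Lemma card_unique_hit : #|E| = #|C| * #|A :&: E|.
Proof.
transitivity (\sum_(x in E) \sum_(c | act c x \in A) 1).
  by rewrite -sum1_card; apply: eq_bigr => x Ex; rewrite sum1dep_card unique_hit.
rewrite (exchange_big_dep predT) //= -sum_nat_const; apply: eq_bigr => c _.
by rewrite -(card_hitting c) -sum1dep_card.
Qed.

End UniqueHitCount.

Lemma forall_in_setU1 (T : finType) (i : T) (S : {set T}) (P : pred T) :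
  [forall j in i |: S, P j] = P i && [forall j in S, P j].
Proof.
apply/forall_inP/andP => [H | [Pi /forall_inP H] j].
- by split; [apply: H; rewrite setU11 | apply/forall_inP => j Sj; rewrite H // setU1r].
- by case/setU1P => [-> // | /H].
Qed.

Section Proportional.
Variables (T I : finType) (X : T -> I -> bool) (b : bool) (A : {set T}) (m : nat).

Definition agree_on (S : {set I}) := [set x | [forall i in S, X x i == b]].
Definition pinned (S S' : {set I}) :=
  agree_on S :&: [set x | [forall i in S', X x i != b]].

Hypothesis card_agree_on : forall S, #|agree_on S| = m * #|A :&: agree_on S|.

Lemma pinned0 S : pinned S set0 = agree_on S.
Proof. by apply/setIidPl/subsetP => x _; rewrite inE; apply/forall_inP => i; rewrite inE. Qed.

Lemma pinned_setU1 S S' i :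
  pinned S (i |: S') = pinned S S' :\: pinned (i |: S) S'.
Proof.
apply/setP => x; rewrite !inE !forall_in_setU1.
by case: (X x i == b); case: [forall j in S, _]; case: [forall j in S', _].
Qed.

Lemma pinned_sub S S' i : pinned (i |: S) S' \subset pinned S S'.
Proof.
by apply/subsetP => x; rewrite !inE forall_in_setU1 => /andP[/andP[_ ->] ->].
Qed.

Lemma card_pinned S S' : #|pinned S S'| = m * #|A :&: pinned S S'|.
Proof.
have [k] := ubnP #|S'|; elim: k S S' => // k IH S S' ltS'k.
case: (set_0Vmem S') => [-> | [i S'i]]; first by rewrite pinned0.
have ltk : #|S' :\ i| < k by rewrite -ltnS (leq_trans _ ltS'k) // (cardsD1 i S') S'i.
rewrite -(setD1K S'i) pinned_setU1 cardsDS ?pinned_sub // setIDA cardsD.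
by rewrite -setIA (setIidPr (pinned_sub _ _ _)) mulnBr -!IH.
Qed.

End Proportional.

Lemma unif_prob_proportional (T : finType) (A E : {set T}) (m : nat) :
  0 < #|T| -> #|T| = m * #|A| -> #|E| = m * #|A :&: E| ->
  unif_prob A E = unif_prob [set: T] E.
Proof.
move=> T_gt0 cardT cardE.
have /andP[m_gt0 A_gt0] : (0 < m) && (0 < #|A|) by rewrite -muln_gt0 -cardT.
rewrite /unif_prob setTI cardsT cardT cardE !GRing.natrM -GRing.mulf_div.
by rewrite GRing.divff ?GRing.mul1r // Num.Theory.pnatr_eq0 -lt0n.
Qed.

Section LeastMinimizer.
Variables (f : nat -> nat) (m : nat).

Definition least_minimizer q0 :=
  (forall q, q0 <= q <= m -> f q0 <= f q) /\ (forall q, 0 < q < q0 -> f q0 < f q).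

Lemma least_minimizer_unique q1 q2 :
  0 < q1 <= m -> 0 < q2 <= m -> least_minimizer q1 -> least_minimizer q2 -> q1 = q2.
Proof.
move=> q1_in q2_in [le1 lt1] [le2 lt2].
case: (ltngtP q1 q2) => // lt12.
- by have := lt2 q1; have := le1 q2; lia.
- by have := lt1 q2; have := le2 q1; lia.
Qed.

Lemma least_minimizer_exists : 0 < m -> exists2 q0, 0 < q0 <= m & least_minimizer q0.
Proof.
move=> m_gt0.
have ex_val : exists v, has (fun q => f q == v) (iota 1 m).
  by exists (f 1); apply/hasP; exists 1; rewrite ?mem_iota ?eqxx //; lia.
case: (ex_minnP ex_val) => v /hasP[q1 q1_in /eqP fq1] v_min.
have ex_arg : exists q, (0 < q <= m) && (f q == v).
  by exists q1; rewrite fq1 eqxx andbT; move: q1_in; rewrite mem_iota; lia.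
case: (ex_minnP ex_arg) => q0 /andP[q0_in /eqP fq0] q0_min.
have f_ge q : 0 < q <= m -> v <= f q.
  by move=> q_in; apply: v_min; apply/hasP; exists q; rewrite ?mem_iota //; lia.
exists q0 => //; split=> q q_in; rewrite fq0; first by apply: f_ge; lia.
rewrite ltn_neqAle f_ge ?andbT; last by lia.
by apply/eqP => fq; have := q0_min q; rewrite fq eqxx andbT; lia.
Qed.

End LeastMinimizer.

Lemma card_ord_lt N K : K <= N -> #|[set r : 'I_N | r < K]| = K.
Proof.
move=> le_KN; have widen_inj : injective (widen_ord le_KN) by move=> a b [] /val_inj.
rewrite -[RHS](card_ord K) -(card_imset _ widen_inj).
congr #|pred_of_set _|; apply/setP => r; rewrite inE; apply/idP/imsetP.
- by move=> lt_rK; exists (Ordinal lt_rK); last apply: val_inj.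
- by case=> r' _ ->; rewrite /= ltn_ord.
Qed.

Section CyclicLemma.
Variable n : nat.
Local Notation m := n.+1.
Local Notation FT := (Ftilde n).
Implicit Types (g : FT) (c : 'I_m).

Definition shift c g : FT := [ffun t => (g t + c)%R].

Definition cnt_lt g i := #|[set t | g t < i]|.

Lemma shift_inj c : injective (shift c).
Proof.
move=> g1 g2 /ffunP eq12; apply/ffunP => t.
by have := eq12 t; rewrite !ffunE => /GRing.addIr.
Qed.

Lemma inPF_cnt_lt g : (g \in PF n) = [forall i : 'I_n, i.+1 <= cnt_lt g i.+1].
Proof.
rewrite inE andb_idl // => /forallP le_cnt; apply/forallP => t.
have lt_pn : n.-1 < n by rewrite prednK ?ltnSn //; apply: leq_ltn_trans (ltn_ord t).
have := le_cnt (Ordinal lt_pn); rewrite /= prednK; last exact: leq_ltn_trans (ltn_ord t).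
move=> le_n_cnt; suff /setP/(_ t) : [set t | g t < n] = setT by rewrite !inE.
by apply/eqP; rewrite eqEcard subsetT cardsT card_ord.
Qed.

Lemma PF_cnt_ltP g : reflect (forall i, 0 < i <= n -> i <= cnt_lt g i) (g \in PF n).
Proof.
rewrite inPF_cnt_lt; apply: (iffP forallP) => [le_cnt i i_in | le_cnt i].
- have lt_i1n : i.-1 < n by lia.
  by have := le_cnt (Ordinal lt_i1n); rewrite /= prednK //; lia.
- by apply: le_cnt; rewrite /= ltn_ord.
Qed.

Lemma cnt_lt_mono g : {homo cnt_lt g : a b / a <= b}.
Proof.
move=> a b le_ab; apply: subset_leq_card; apply/subsetP => t; rewrite !inE.
by move/leq_trans; apply.
Qed.

Lemma cnt_lt0 g : cnt_lt g 0 = 0.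
Proof. by apply: eq_card0 => t; rewrite !inE. Qed.

Lemma cnt_lt_max g q : cnt_lt g q <= n.
Proof. by rewrite -[n]card_ord max_card. Qed.

Lemma cnt_lt_full g q : m <= q -> cnt_lt g q = n.
Proof.
move=> le_mq; rewrite -[RHS]card_ord; apply: eq_card => t.
by rewrite !inE (leq_trans (ltn_ord _) le_mq).
Qed.

Lemma card_val_between g a b : a <= b ->
  #|[set t | a <= g t < b]| = cnt_lt g b - cnt_lt g a.
Proof.
move=> le_ab; rewrite /cnt_lt -cardsDS.
  by apply: eq_card => t; rewrite !inE; lia.
by apply/subsetP => t; rewrite !inE => /leq_trans; apply.
Qed.

(* A value below [i] after the shift by [c] either was below [i - c], or
   wrapped around from [[m - c, m - c + i)]. *)
Lemma cnt_lt_shift c g i : i <= n ->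
  cnt_lt (shift c g) i = cnt_lt g (i - c) + (cnt_lt g (m - c + i) - cnt_lt g (m - c)).
Proof.
move=> le_in; have lt_cm := ltn_ord c.
rewrite -card_val_between ?leq_addr // -cardsUI.
have -> : [set t | g t < i - c] :&: [set t | m - c <= g t < m - c + i] = set0.
  by apply/setP => t; rewrite !inE; lia.
rewrite cards0 addn0; apply: eq_card => t; rewrite !inE ffunE /=.
have lt_gm := ltn_ord (g t); case: (ltnP (g t + c) m) => [lt_sum | ge_sum].
- by rewrite modn_small //; lia.
- have -> : g t + c = (g t + c - m) + m by lia.
  by rewrite modnDr modn_small; lia.
Qed.

Lemma cnt_lt_shift_low c g i : i <= c ->
  cnt_lt (shift c g) i = cnt_lt g (m - c + i) - cnt_lt g (m - c).
Proof.
move=> le_ic; rewrite cnt_lt_shift; last by have := ltn_ord c; lia.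
have -> : i - c = 0 by lia.
by rewrite cnt_lt0.
Qed.

Lemma cnt_lt_shift_high c g i : c < i <= n ->
  cnt_lt (shift c g) i = cnt_lt g (i - c) + n - cnt_lt g (m - c).
Proof.
move=> /andP[lt_ci le_in]; rewrite cnt_lt_shift // (cnt_lt_full g (q := m - c + i)); last by lia.
by have := cnt_lt_max g (m - c); lia.
Qed.

(* [g] parks iff [surplus g q >= 1] for [0 < q <= n], and [surplus g m = 1]. *)
Definition surplus g q := cnt_lt g q + m - q.

Lemma shift_PF c g :
  (shift c g \in PF n) <-> least_minimizer (surplus g) m (m - c).
Proof.
have lt_cm := ltn_ord c; rewrite /surplus; split.
- move/PF_cnt_ltP => le_cnt; split=> q /andP[lo_q hi_q].
  + have := cnt_lt_mono g lo_q; case: (ltnP (m - c) q) => [lt_q | ?]; last first.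
      by have -> : q = m - c by lia.
    have := le_cnt (q - (m - c)); rewrite cnt_lt_shift_low; last by lia.
    have -> : m - c + (q - (m - c)) = q by lia.
    lia.
  + have := cnt_lt_mono g (ltnW hi_q); have := cnt_lt_max g q.
    by have := le_cnt (q + c); rewrite cnt_lt_shift_high ?addnK; lia.
- move=> [le_min lt_min]; apply/PF_cnt_ltP => i /andP[i_gt0 le_in].
  case: (leqP i c) => [le_ic | lt_ci].
  + rewrite cnt_lt_shift_low //; have := le_min (m - c + i).
    by have := cnt_lt_mono g (leq_addr i (m - c)); lia.
  + rewrite cnt_lt_shift_high; last by lia.
    by have := lt_min (i - c); have := cnt_lt_max g (m - c); lia.
Qed.

Lemma cyclic_lemma g : #|[set c | shift c g \in PF n]| = 1.
Proof.
have [q0 q0_in q0_min] := least_minimizer_exists (surplus g) (ltn0Sn n).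
have lt_c0 : m - q0 < m by lia.
rewrite -(cards1 (Ordinal lt_c0)); congr #|pred_of_set _|; apply/setP => c.
have m_q0 : m - (m - q0) = q0 by lia.
rewrite in_set in_set1; apply/idP/eqP => [/shift_PF c_min | ->]; last first.
  by apply/shift_PF; rewrite /= m_q0.
have lt_cm := ltn_ord c; have c_in : 0 < m - c <= m by lia.
by apply: val_inj => /=; have := least_minimizer_unique c_in q0_in c_min q0_min; lia.
Qed.

Lemma PF_value_counts (h h' : FT) :
  (forall P : pred 'I_m, #|[set t | P (h t)]| = #|[set t | P (h' t)]|) ->
  (h \in PF n) = (h' \in PF n).
Proof.
move=> eq_counts; rewrite !inPF_cnt_lt; apply: eq_forallb => i.
by rewrite /cnt_lt (eq_counts (fun x : 'I_m => x < i.+1)).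
Qed.

End CyclicLemma.

Lemma card_values_eq (T : finType) (m : nat) (D : pred T) (u u' : T -> 'I_m) :
  (forall v : 'I_m, #|[set j | D j & u j <= v]| = #|[set j | D j & u' j <= v]|) ->
  forall P : pred 'I_m, #|[set j | D j & P (u j)]| = #|[set j | D j & P (u' j)]|.
Proof.
move=> eq_le.
have eq_lt (x : 'I_m) : #|[set j | D j & u j < x]| = #|[set j | D j & u' j < x]|.
  case: (posnP x) => [x0 | x_gt0].
    by rewrite !eq_card0 // => j; rewrite !inE x0 ltn0 andbF.
  have lt_x1 : x.-1 < m by rewrite (leq_ltn_trans (leq_pred x)).
  have lt_le w : #|[set j | D j & w j < x]| = #|[set j | D j & w j <= Ordinal lt_x1]|.
    by apply: eq_card => j; rewrite !inE /=; congr (_ && _); lia.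
  by rewrite !lt_le eq_le.
have eq_eq (x : 'I_m) : #|[set j | D j & u j == x]| = #|[set j | D j & u' j == x]|.
  have eq_diff w : #|[set j | D j & w j == x]| =
      #|[set j | D j & w j <= x]| - #|[set j | D j & w j < x]|.
    rewrite -cardsDS; last by apply/subsetP => j; rewrite !inE => /andP[-> /ltnW].
    apply: eq_card => j; rewrite !inE ltn_neqAle; case: (D j) => //=.
    by rewrite -(inj_eq val_inj) /=; case: eqP => [-> | _]; rewrite ?leqnn //=; case: (_ <= _).
  by rewrite !eq_diff eq_le eq_lt.
move=> P; have by_value w : #|[set j | D j & P (w j)]| = \sum_(x | P x) #|[set j | D j & w j == x]|.
  rewrite -sum1dep_card (partition_big w P) => [|j /andP[]//].
  apply: eq_bigr => x Px; rewrite sum1dep_card; apply: eq_card => j; rewrite !inE.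
  by case: eqP => [-> | _]; rewrite ?Px ?andbF ?andbT.
by rewrite !by_value; apply: eq_bigr => x _; apply: eq_eq.
Qed.

Section BlockSort.
Variables (p : nat) (S : pred 'I_p) (dir : bool).
Local Notation n := p.+1.
Local Notation m := p.+2.
Local Notation FT := (Ftilde n).
Implicit Types (g u : FT) (c : 'I_m) (i j : 'I_n).

Definition link_lo (k : 'I_p) : 'I_n := widen_ord (leqnSn p) k.
Definition link_hi (k : 'I_p) : 'I_n := lift ord0 k.

(* The links [k] in [S] join positions [k] and [k.+1]; the maximal runs of
   joined positions are the blocks, numbered by the unjoined links before. *)
Definition block (t : 'I_n) := #|[set k : 'I_p | (k < t) && ~~ S k]|.
Definition before (j i : 'I_n) := if dir then j < i else i < j.
Definition brank (i : 'I_n) := #|[set j : 'I_n | (block j == block i) && before j i]|.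
Definition bcount (u : FT) (b v : nat) := #|[set j : 'I_n | block j == b & u j <= v]|.
(* The [k]-th smallest value (from [0]) of [u] on block [b]. *)
Definition bnth (u : FT) (b k : nat) := #|[set v : 'I_m | bcount u b v <= k]|.

(* Shift the values by [c], then sort them inside every block along [before]. *)
Definition resort c g : FT := [ffun i => inord (bnth (shift c g) (block i) (brank i))].

Definition block_sorted := [set g : FT | [forall i, forall j,
  (before j i && (block j == block i)) ==> (g j <= g i)]].

Lemma before_irr i : before i i = false.
Proof. by rewrite /before ltnn; case: dir. Qed.

Lemma before_trans i j k : before i j -> before j k -> before i k.
Proof. by rewrite /before; case: dir => ? ?; lia. Qed.

Lemma before_total i j : i != j -> before i j || before j i.
Proof.
move=> /eqP ne_ij; have : (i : nat) <> j by move/val_inj.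
by rewrite /before; case: dir; lia.
Qed.

Lemma block_lt t : block t < n.
Proof. by rewrite ltnS -[p]card_ord max_card. Qed.

Lemma bcount_mono u b : {homo bcount u b : v w / v <= w}.
Proof.
move=> v w le_vw; apply: subset_leq_card; apply/subsetP => j; rewrite !inE.
by case/andP => -> /leq_trans; apply.
Qed.

Lemma bcount_top u b v : p.+1 <= v -> bcount u b v = #|[set j | block j == b]|.
Proof.
by move=> le_nv; apply: eq_card => j; rewrite !inE (leq_trans _ le_nv) ?andbT // -ltnS.
Qed.

Lemma bnth_le u b k v : v < m -> (bnth u b k <= v) = (k < bcount u b v).
Proof.
move=> lt_vm; case: ltnP => [lt_k | le_k].
- rewrite /bnth -(card_ord_lt (N := m) (ltnW lt_vm)); apply: subset_leq_card.
  apply/subsetP => w; rewrite !inE => le_w; rewrite ltnNge; apply/negP => le_vw.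
  by have := bcount_mono u b le_vw; lia.
- apply/negbTE; rewrite -ltnNge /bnth -(card_ord_lt (N := m) lt_vm).
  apply: subset_leq_card; apply/subsetP => w; rewrite !inE ltnS => le_wv.
  by have := bcount_mono u b le_wv; lia.
Qed.

Lemma bnth_mono u b : {homo bnth u b : k l / k <= l}.
Proof.
move=> k l le_kl; apply: subset_leq_card; apply/subsetP => v; rewrite !inE.
by move/leq_trans; apply.
Qed.

Lemma brank_lt i : brank i < #|[set j | block j == block i]|.
Proof.
apply: proper_card; apply/properP; split.
- by apply/subsetP => j; rewrite !inE => /andP[].
- by exists i; rewrite !inE ?eqxx ?before_irr.
Qed.

Lemma bnth_lt u i : bnth u (block i) (brank i) < m.
Proof. by rewrite ltnS bnth_le // bcount_top ?brank_lt. Qed.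

Lemma brank_before j i : block j = block i -> before j i -> brank j < brank i.
Proof.
move=> eq_b ji; apply: proper_card; apply/properP; split.
- apply/subsetP => k; rewrite !inE => /andP[/eqP-> kj].
  by rewrite eq_b eqxx (before_trans kj ji).
- by exists j; rewrite !inE ?eq_b ?eqxx ?before_irr.
Qed.

Lemma brank_inj j i : block j = block i -> brank j = brank i -> j = i.
Proof.
move=> eq_b eq_r; apply/eqP/negPn/negP => /before_total/orP[] lt_r.
- by have := brank_before eq_b lt_r; rewrite eq_r ltnn.
- by have := brank_before (esym eq_b) lt_r; rewrite eq_r ltnn.
Qed.

Lemma card_brank_lt b K : K <= #|[set j | block j == b]| ->
  #|[set j | block j == b & brank j < K]| = K.
Proof.
move=> le_K; have le_n (A : {set 'I_n}) : #|A| <= n.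
  by apply: leq_trans (max_card _) _; rewrite card_ord.
pose f j : 'I_n := inord (brank j).
have fE j : block j = b -> (f j : nat) = brank j.
  by move=> jb; rewrite inordK // (leq_trans (brank_lt j)).
have f_inj : {in [set j | block j == b] &, injective f}.
  move=> x y; rewrite !inE => /eqP xb /eqP yb fxy.
  by apply: brank_inj; rewrite ?xb ?yb // -(fE _ xb) -(fE _ yb) fxy.
have f_block : f @: [set j | block j == b] = [set r : 'I_n | r < #|[set j | block j == b]|].
  apply/eqP; rewrite eqEcard card_in_imset // card_ord_lt ?leqnn ?andbT //.
  by apply/subsetP => _ /imsetP[j /[!inE] /eqP jb ->]; rewrite fE // -jb brank_lt.
rewrite -(card_in_imset (f := f)); last first.
  by move=> x y /[!inE] /andP[xb _] /andP[yb _]; apply: f_inj; rewrite inE.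
rewrite -[RHS](card_ord_lt (N := n)); last exact: leq_trans le_K (le_n _).
congr #|pred_of_set _|; apply/setP => r; rewrite inE; apply/imsetP/idP.
- by case=> j /[!inE] /andP[/eqP jb lt_jK] ->; rewrite fE.
- move=> lt_rK; have : r \in f @: [set j | block j == b] by rewrite f_block inE (leq_trans lt_rK).
  case/imsetP => j /[!inE] /eqP jb rE; exists j => //.
  by rewrite inE jb eqxx -(fE _ jb) -rE.
Qed.

Lemma resortE c g i : (resort c g i : nat) = bnth (shift c g) (block i) (brank i).
Proof. by rewrite ffunE inordK // bnth_lt. Qed.

Lemma bcount_resort c g b (v : 'I_m) : bcount (resort c g) b v = bcount (shift c g) b v.
Proof.
rewrite -[RHS](card_brank_lt (b := b) (K := bcount _ b v)); last first.
  by apply: subset_leq_card; apply/subsetP => j /[!inE] /andP[].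
by apply: eq_card => j; rewrite !inE resortE; case: eqP => // <-; rewrite bnth_le.
Qed.

Lemma resort_sorted c g : resort c g \in block_sorted.
Proof.
rewrite inE; apply/forallP => i; apply/forallP => j; apply/implyP => /andP[ji /eqP eq_b].
by rewrite !resortE eq_b bnth_mono // ltnW // brank_before.
Qed.

Lemma block_sortedP g j i :
  g \in block_sorted -> before j i -> block j = block i -> g j <= g i.
Proof.
rewrite inE => /forallP/(_ i)/forallP/(_ j)/implyP + ji eq_b.
by apply; rewrite ji eq_b /=.
Qed.

Lemma brank_lt_bcount g i : g \in block_sorted -> brank i < bcount g (block i) (g i).
Proof.
move=> g_sorted; have := cardsU1 i [set j | (block j == block i) && before j i].
rewrite inE before_irr andbF add1n => <-; apply: subset_leq_card.
apply/subsetP => j /[!inE] /orP[/eqP-> | /andP[/eqP eq_b ji]]; first by rewrite eqxx leqnn.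
by rewrite eq_b eqxx block_sortedP.
Qed.

Lemma bcount_pred_le_brank g i :
  g \in block_sorted -> 0 < g i -> bcount g (block i) (g i).-1 <= brank i.
Proof.
move=> g_sorted gi_gt0; apply: subset_leq_card; apply/subsetP => j /[!inE].
case/andP=> /eqP eq_b lt_gj; rewrite eq_b eqxx /=.
have ne_ji : j != i by apply: contraTneq lt_gj => ->; rewrite -ltnS prednK // ltnn.
case/orP: (before_total ne_ji) => // ij.
by have := block_sortedP g_sorted ij (esym eq_b); lia.
Qed.

Lemma bnth_sorted g i : g \in block_sorted -> bnth g (block i) (brank i) = g i.
Proof.
move=> g_sorted; apply/eqP; rewrite eqn_leq bnth_le // brank_lt_bcount //=.
case: (posnP (g i)) => [-> // | gi_gt0]; rewrite leqNgt -(prednK gi_gt0) ltnS.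
by rewrite bnth_le ?(leq_ltn_trans (leq_pred _)) // -leqNgt bcount_pred_le_brank.
Qed.

Lemma card_by_block u (P : pred 'I_m) :
  #|[set t | P (u t)]| = \sum_(b < n) #|[set j | block j == b & P (u j)]|.
Proof.
rewrite -sum1dep_card (partition_big (fun t => Ordinal (block_lt t)) predT) //.
apply: eq_bigr => b _; rewrite sum1dep_card; apply: eq_card => j.
by rewrite !inE -val_eqE andbC.
Qed.

Lemma resort_PF c g : (resort c g \in PF n) = (shift c g \in PF n).
Proof.
apply: PF_value_counts => P; rewrite !card_by_block; apply: eq_bigr => b _.
by apply: card_values_eq => v; apply: bcount_resort.
Qed.

Lemma resort_inj c : {in block_sorted &, injective (resort c)}.
Proof.
move=> g1 g2 g1_sorted g2_sorted eq12.
have eq_bcount b v : bcount g1 b v = bcount g2 b v.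
  have unshift g : bcount g b v = #|[set j | block j == b & (shift c g j - c)%R <= v]|.
    by apply: eq_card => j; rewrite !inE ffunE GRing.addrK.
  rewrite !unshift; apply: (card_values_eq (D := fun j => block j == b)
    (u := shift c g1) (u' := shift c g2) _ (fun x => (x - c)%R <= v)) => w.
  by move: (bcount_resort c g1 b w) (bcount_resort c g2 b w); rewrite /bcount eq12 => <- <-.
apply/ffunP => i; apply: val_inj => /=.
rewrite -(bnth_sorted i g1_sorted) -(bnth_sorted i g2_sorted).
by apply: eq_card => v; rewrite !inE eq_bcount.
Qed.

Lemma card_block_sorted : #|block_sorted| = m * #|PF n :&: block_sorted|.
Proof.
rewrite {1}(@card_unique_hit _ 'I_m resort (PF n)) ?card_ord // => [c g _ | c | g _].
- exact: resort_sorted.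
- exact: resort_inj.
- by rewrite -(cyclic_lemma g); apply: eq_card => c; rewrite [LHS]in_set [RHS]in_set resort_PF.
Qed.

Definition ordered (a b : nat) := if dir then a <= b else b <= a.

Lemma ordered_trans b a c : ordered a b -> ordered b c -> ordered a c.
Proof. by rewrite /ordered; case: dir => ? ?; lia. Qed.

Lemma block_mono : {homo block : j i / (j : nat) <= i}.
Proof.
move=> j i le_ji; apply: subset_leq_card; apply/subsetP => k; rewrite !inE.
by case/andP => lt_kj ->; rewrite (leq_trans lt_kj le_ji).
Qed.

Lemma block_link k : S k -> block (link_lo k) = block (link_hi k).
Proof.
move=> Sk; apply: eq_card => l; rewrite !inE /=.
case Sl: (S l); rewrite ?andbF ?andbT //.
have : (l : nat) <> k by move/val_inj => lk; rewrite lk Sk in Sl.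
rewrite /bump add1n; lia.
Qed.

Lemma link_in_block j i (k : 'I_p) : j <= k < i -> block j = block i -> S k.
Proof.
move=> /andP[le_jk lt_ki] eq_b; apply/negPn/negP => nSk.
have : block j < block i; last by rewrite eq_b ltnn.
apply: proper_card; apply/properP; split.
- apply/subsetP => l; rewrite !inE => /andP[lt_lj ->]; rewrite andbT; lia.
- by exists k; rewrite !inE ?lt_ki ?nSk // ltnNge le_jk.
Qed.

Lemma ordered_in_block g : (forall k, S k -> ordered (g (link_lo k)) (g (link_hi k))) ->
  forall j i, j <= i -> block j = block i -> ordered (g j) (g i).
Proof.
move=> ordered_links j i; have [d] := ubnP (i - j); elim: d i => // d IH i lt_d le_ji eq_b.
case: (ltngtP j i) => [lt_ji | lt_ij | /val_inj <-];
  [| by rewrite ltnNge le_ji in lt_ij | by rewrite /ordered; case: dir].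
have lt_i1 : i.-1 < p by have := ltn_ord i; lia.
pose k := Ordinal lt_i1.
have hi_k : link_hi k = i by apply: val_inj; rewrite /= /bump /=; lia.
have Sk : S k by apply: (link_in_block (j := j) (i := i)) => //=; lia.
have eq_b' : block j = block (link_lo k).
  apply/eqP; rewrite eqn_leq block_mono /=; last by lia.
  by rewrite eq_b -hi_k -block_link.
apply: ordered_trans (IH (link_lo k) _ _ eq_b') _; rewrite /=; try lia.
by rewrite -hi_k; apply: ordered_links.
Qed.

Lemma block_sorted_links : block_sorted =
  [set g : FT | [forall k, S k ==> ordered (g (link_lo k)) (g (link_hi k))]].
Proof.
apply/setP => g; rewrite [RHS]inE; apply/idP/forall_inP => [g_sorted k Sk | ordered_links].
- have lo_hi : (link_lo k : nat) < link_hi k by rewrite /= /bump add1n.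
  rewrite /ordered; case hd: dir.
  + by apply: block_sortedP g_sorted _ (block_link Sk); rewrite /before hd.
  + by apply: block_sortedP g_sorted _ (esym (block_link Sk)); rewrite /before hd.
- rewrite inE; apply/forallP => i; apply/forallP => j; apply/implyP => /andP[ji /eqP eq_b].
  move: ji; rewrite /before; case hd: dir => ji.
  + by have := ordered_in_block ordered_links (ltnW ji) eq_b; rewrite /ordered hd.
  + by have := ordered_in_block ordered_links (ltnW ji) (esym eq_b); rewrite /ordered hd.
Qed.

End BlockSort.

Definition const_links p (S : pred 'I_p) :=
  [set g : Ftilde p.+1 | [forall k, S k ==> (g (link_lo k) == g (link_hi k))]].

Lemma card_const_links p (S : pred 'I_p) :
  #|const_links S| = p.+2 * #|PF p.+1 :&: const_links S|.
Proof.
rewrite {1}(@card_unique_hit _ 'I_p.+2 (@shift p.+1) (PF p.+1)) ?card_ord // => [c g | c | g _].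
- rewrite !inE => /forall_inP g_const; apply/forall_inP => k Sk.
  by rewrite !ffunE (eqP (g_const k Sk)).
- by move=> g1 g2 _ _; apply: shift_inj.
- exact: cyclic_lemma.
Qed.

Lemma Xstat_links p R (g : Ftilde p.+1) (k : 'I_p) :
  Xstat R g k = R (g (link_hi k)) (g (link_lo k)).
Proof.
have gvE (t : 'I_p.+1) : gv g t = g t.
  by rewrite /gv; case: insubP => [u _ /val_inj -> | ]; rewrite ?ltn_ord.
by rewrite /Xstat -[k.+1]/(val (link_hi k)) -[val k]/(val (link_lo k)) !gvE.
Qed.

Lemma same_joint_law_agree p (R : rel nat) (b : bool) :
  (forall S, #|agree_on (@Xstat p.+1 R) b S| =
             p.+2 * #|PF p.+1 :&: agree_on (@Xstat p.+1 R) b S|) ->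
  same_joint_law p.+1 R.
Proof.
move=> card_agree t; pose X := @Xstat p.+1 R.
have stat_pinned : stat_event R t = pinned X b [set i | t i == b] [set i | t i != b].
  apply/setP => g; rewrite !inE; apply/forallP/andP => [eq_t | [agree disagree] i].
  - by split; apply/forall_inP => i; rewrite inE /X (eqP (eq_t i)).
  - have := forall_inP agree i; have := forall_inP disagree i; rewrite !inE.
    case: (eqVneq (t i) b) => [-> _ /(_ isT) // | tb /(_ isT) ne _].
    by move: ne tb; rewrite /X; case: (Xstat R g i); case: (t i); case: (b).
have agree0 : agree_on X b set0 = setT.
  by apply/setP => g; rewrite !inE; apply/forall_inP => i; rewrite inE.
apply: (unif_prob_proportional (m := p.+2)).
- by apply/card_gt0P; exists [ffun _ => ord0].
- by have := card_agree set0; rewrite -/X agree0 setIT cardsT.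
- by rewrite stat_pinned (card_pinned card_agree).
Qed.

Lemma agree_on_ordered p (R : rel nat) b dir (S : {set 'I_p}) :
  (forall x y, (R y x == b) = ordered dir x y) ->
  agree_on (@Xstat p.+1 R) b S = block_sorted (mem S) dir.
Proof.
move=> R_ordered; rewrite block_sorted_links; apply/setP => g; rewrite !inE.
by apply: eq_forallb => k; rewrite Xstat_links R_ordered.
Qed.

Lemma agree_on_eq p (S : {set 'I_p}) :
  agree_on (@Xstat p.+1 (fun a b => a == b)) true S = const_links (mem S).
Proof.
apply/setP => g; rewrite !inE; apply: eq_forallb => k.
by rewrite Xstat_links eqb_id eq_sym.
Qed.

Theorem theorem7 (n : nat) (hn : (2 <= n)%N) :
  same_joint_law n (fun a b => (a < b)%N) /\
  same_joint_law n (fun a b => a == b) /\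
  same_joint_law n (fun a b => (a <= b)%N) /\
  same_joint_law n (fun a b => (a > b)%N) /\
  same_joint_law n (fun a b => (a >= b)%N).
Proof.
case: n hn => [// | p] _.
have ordered_law R b dir : (forall x y, (R y x == b) = ordered dir x y) ->
    same_joint_law p.+1 R.
  move=> R_ordered; apply: (same_joint_law_agree (b := b)) => S.
  by rewrite (agree_on_ordered _ R_ordered) card_block_sorted.
split; [|split; [|split; [|split]]].
- by apply: (ordered_law _ false true) => x y; rewrite eqbF_neg -leqNgt.
- by apply: (same_joint_law_agree (b := true)) => S; rewrite agree_on_eq card_const_links.
- by apply: (ordered_law _ true false) => x y; rewrite eqb_id.
- by apply: (ordered_law _ false false) => x y; rewrite eqbF_neg -leqNgt.
- by apply: (ordered_law _ true true) => x y; rewrite eqb_id.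
Qed.
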